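(* Let $\mathbb{F}$ be an algebraically closed field of characteristic $0$, $D$ an $\mathbb{F}$-vector space with $\dim D=3$, and $\Gamma\subseteq D^{\ast}$ an additive subgroup with $\Gamma\simeq\mathbb{Z}^3$ and $\bigcap_{\alpha\in\Gamma}\ker\alpha=\{0\}$. Let $M=\bigoplus_{\theta\in\Gamma}M_\theta$ be a $\Gamma$-graded $\mathcal{S}(\Gamma,D)$-module with $\dim M_\theta=1$, $M_\theta=\mathbb{F}w_\theta$. Fix a $\mathbb{Z}$-basis $\{\varepsilon_1,\varepsilon_2,\varepsilon_3\}$ of $\Gamma$ and nonzero $\partial_1\in\ker\varepsilon_2\cap\ker\varepsilon_3$, $\partial_2\in\ker\varepsilon_1\cap\ker\varepsilon_3$, $\partial_3\in\ker\varepsilon_1\cap\ker\varepsilon_2$. Then there exists $\nu\in\Gamma$ satisfying at least one of the following six conditions: (a) $x^{-\varepsilon_2}\partial_1.x^{\varepsilon_2}\partial_1.w_\nu\neq0$ and $x^{-\varepsilon_3}\partial_1.x^{\varepsilon_3}\partial_1.w_\nu\neq0$; (b) $x^{-\varepsilon_1}\partial_2.x^{\varepsilon_1}\partial_2.w_\nu\neq0$ and $x^{-\varepsilon_3}\partial_2.x^{\varepsilon_3}\partial_2.w_\nu\neq0$; (c) $x^{-\varepsilon_1}\partial_3.x^{\varepsilon_1}\partial_3.w_\nu\neq0$ and $x^{-\varepsilon_2}\partial_3.x^{\varepsilon_2}\partial_3.w_\nu\neq0$; (a') $x^{-\varepsilon_3}\partial_1.x^{\varepsilon_3}\partial_1.w_\nu=0$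 and $x^{-\varepsilon_3}\partial_2.x^{\varepsilon_3}\partial_2.w_\nu=0$; (b') $x^{-\varepsilon_1}\partial_2.x^{\varepsilon_1}\partial_2.w_\nu=0$ and $x^{-\varepsilon_1}\partial_3.x^{\varepsilon_1}\partial_3.w_\nu=0$; (c') $x^{-\varepsilon_2}\partial_1.x^{\varepsilon_2}\partial_1.w_\nu=0$ and $x^{-\varepsilon_2}\partial_3.x^{\varepsilon_2}\partial_3.w_\nu=0$.
   Context: $\mathcal{S}(\Gamma,D)$ is the Lie algebra spanned by $x^\alpha\partial$ with $\alpha\in\Gamma\setminus\{0\}$, $\partial\in\ker\alpha$ (linear in $\partial$), with bracket $[x^\alpha\partial_1,x^\beta\partial_2]=x^{\alpha+\beta}(\beta(\partial_1)\partial_2-\alpha(\partial_2)\partial_1)$; graded modules satisfy $x^\alpha\partial.M_\theta\subseteq M_{\alpha+\theta}$. *)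

From HB Require Import structures.
From mathcomp Require Import all_boot all_order all_algebra.
Set Implicit Arguments. Unset Strict Implicit. Unset Printing Implicit Defensive.
Import Order.TTheory GRing.Theory Num.Theory.
Local Open Scope ring_scope.

Definition dual (F : fieldType) (D : vectType F) := 'Hom(D, F^o).

Definition inZspan3 (V : zmodType) (e1 e2 e3 x : V) : Prop :=
  exists a b c : int, x = e1 *~ a + e2 *~ b + e3 *~ c.

(* [act a d m] is the action x^a d . m of the generator x^a d of S(Gamma,D)
   (a in Gamma \ {0}, d in ker a) on m in M; [w t] is the chosen basis
   vector of M_t (t in Gamma).  [graded_S_module Gam act w] says that M is a
   Gamma-graded S(Gamma,D)-module M = (+)_{t in Gamma} M_t with M_t = F w_t
   of dimension 1. *)
Definition graded_S_module (F : fieldType) (D : vectType F)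
  (Gam : dual D -> Prop) (M : lmodType F)
  (act : dual D -> D -> M -> M) (w : dual D -> M) : Prop :=
      (forall a d, Gam a -> a != 0 -> a d = 0 ->
         forall (c : F) (m1 m2 : M), act a d (c *: m1 + m2) = c *: act a d m1 + act a d m2) /\
      (forall a, Gam a -> a != 0 -> forall (c : F) d1 d2, a d1 = 0 -> a d2 = 0 ->
         forall m, act a (c *: d1 + d2) m = c *: act a d1 m + act a d2 m) /\
      (* representation of the Lie bracket
         [x^a d1, x^b d2] = x^(a+b) (b(d1) d2 - a(d2) d1)  (which is 0 if a+b=0) *)
      (forall a b d1 d2, Gam a -> a != 0 -> Gam b -> b != 0 -> a d1 = 0 -> b d2 = 0 ->
         forall m, act a d1 (act b d2 m) - act b d2 (act a d1 m) =
           (if a + b == 0 then 0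
            else act (a + b) ((b d1 : F) *: d2 - (a d2 : F) *: d1) m)) /\
      (forall a d t, Gam a -> a != 0 -> a d = 0 -> Gam t ->
         exists c : F, act a d (w t) = c *: w (a + t)) /\
      (forall t, Gam t -> w t != 0) /\
      (forall (s : seq (dual D)) (c : dual D -> F), uniq s ->
         (forall t, t \in s -> Gam t) ->
         \sum_(t <- s) c t *: w t = 0 -> forall t, t \in s -> c t = 0) /\
      (forall m : M, exists (s : seq (dual D)) (c : dual D -> F),
         (forall t, t \in s -> Gam t) /\ m = \sum_(t <- s) c t *: w t).

From HB Require Import structures.
From mathcomp Require Import all_boot all_order all_algebra.
From Stdlib Require Import Classical.
Import Order.TTheory GRing.Theory Num.Theory.
Local Open Scope ring_scope.

Set Implicit Arguments. Unset Strict Implicit.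

(* Write r_e(d, y) for x^{-e}d . x^{e}d . w_y.  The heart of the proof is a turning
   lemma: if r_{e3}(d2, .) != 0 implies r_{e2}(d1, .) != 0 on all of Gamma, then
   r_{e3}(d2, nu) != 0 implies r_{e3}(d1, nu) != 0, and symmetrically with the roles
   of (e2, d2) and (e3, d3) exchanged.  If no nu satisfied one of the six
   alternatives, then at every point the two hypotheses of the turning lemma would
   hold, and at nu = 0 the four resulting implications force an alternative. *)

Section Alternatives.
Variables (V : zmodType) (u12 u13 u21 u23 u31 u32 : V).

(* [uij] stands for x^{-e_j}d_i . x^{e_j}d_i . w_nu; the disjuncts are, in order,
   (a), (b), (c), (a'), (b'), (c'). *)
Definition alternatives : Prop :=
     (u12 != 0 /\ u13 != 0) \/ (u21 != 0 /\ u23 != 0) \/ (u31 != 0 /\ u32 != 0)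
  \/ (u13 = 0 /\ u23 = 0) \/ (u21 = 0 /\ u31 = 0) \/ (u12 = 0 /\ u32 = 0).

Lemma alternatives_or_implications :
  alternatives \/ ((u23 != 0 -> u12 != 0) /\ (u32 != 0 -> u13 != 0)).
Proof.
rewrite /alternatives.
have [u21_0|u21_nz] := eqVneq u21 0; have [u31_0|u31_nz] := eqVneq u31 0;
have [u12_0|u12_nz] := eqVneq u12 0; have [u13_0|u13_nz] := eqVneq u13 0;
have [u23_0|u23_nz] := eqVneq u23 0; have [u32_0|u32_nz] := eqVneq u32 0;
rewrite /=; have T : true by []; have NF : ~ false by []; tauto.
Qed.

Lemma alternatives_of_implications :
  (u23 != 0 -> u12 != 0) -> (u32 != 0 -> u13 != 0) ->
  (u23 != 0 -> u13 != 0) -> (u32 != 0 -> u12 != 0) -> alternatives.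
Proof.
rewrite /alternatives.
have [u12_0|u12_nz] := eqVneq u12 0; have [u13_0|u13_nz] := eqVneq u13 0;
have [u23_0|u23_nz] := eqVneq u23 0; have [u32_0|u32_nz] := eqVneq u32 0;
rewrite /=; have T : true by []; have NF : ~ false by []; tauto.
Qed.

End Alternatives.

Section ZSpan.
Variables (V : zmodType) (e1 e2 e3 : V).

Lemma inZspan3D a b : inZspan3 e1 e2 e3 a -> inZspan3 e1 e2 e3 b -> inZspan3 e1 e2 e3 (a + b).
Proof.
move=> [a1 [a2 [a3 ->]]] [b1 [b2 [b3 ->]]]; exists (a1 + b1), (a2 + b2), (a3 + b3).
by rewrite !mulrzDr addrACA (addrACA (e1 *~ a1)).
Qed.

Lemma inZspan3N a : inZspan3 e1 e2 e3 a -> inZspan3 e1 e2 e3 (- a).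
Proof.
by move=> [a1 [a2 [a3 ->]]]; exists (- a1), (- a2), (- a3); rewrite !mulrNz -!opprD.
Qed.

Lemma inZspan3_2 : inZspan3 e1 e2 e3 e2.
Proof. by exists 0, 1, 0; rewrite !mulr0z mulr1z add0r addr0. Qed.

Lemma inZspan3_3 : inZspan3 e1 e2 e3 e3.
Proof. by exists 0, 0, 1; rewrite !mulr0z mulr1z !add0r. Qed.

Lemma Zbasis_indep23 :
    (forall a b c : int, e1 *~ a + e2 *~ b + e3 *~ c = 0 -> [/\ a = 0, b = 0 & c = 0]) ->
  forall b c : int, e2 *~ b + e3 *~ c = 0 -> b = 0 /\ c = 0.
Proof. by move=> basis b c bc0; case: (basis 0 b c); rewrite ?mulr0z ?add0r. Qed.

End ZSpan.

Lemma inZspan3_eval0 (F : fieldType) (D : vectType F) (e1 e2 e3 : dual D) x al :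
  e1 x = 0 -> e2 x = 0 -> e3 x = 0 -> inZspan3 e1 e2 e3 al -> al x = 0.
Proof.
move=> e1x e2x e3x [a [b [c ->]]].
by rewrite -!scaler_int !add_lfunE !scale_lfunE e1x e2x e3x !scaler0 !addr0.
Qed.

Section GradedModule.
Variables (F : fieldType) (D : vectType F) (M : lmodType F).
Variables (Gam : dual D -> Prop) (act : dual D -> D -> M -> M) (w : dual D -> M).
Hypothesis HM : graded_S_module Gam act w.

Lemma act_is_linear a d : Gam a -> a != 0 -> a d = 0 ->
  forall (c : F) m1 m2, act a d (c *: m1 + m2) = c *: act a d m1 + act a d m2.
Proof. by case: HM => H _; apply: H. Qed.

Lemma act0 a d : Gam a -> a != 0 -> a d = 0 -> act a d 0 = 0.
Proof.
move=> Ga a_neq0 ad; have := act_is_linear Ga a_neq0 ad 1 0 0.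
by rewrite !scale1r addr0 => dup; apply: (addrI (act a d 0)); rewrite addr0 -dup.
Qed.

Lemma actZ a d c m : Gam a -> a != 0 -> a d = 0 -> act a d (c *: m) = c *: act a d m.
Proof. by move=> Ga a_neq0 ad; rewrite -[c *: m]addr0 act_is_linear // act0 // addr0. Qed.

Lemma act_is_linear_in_d a : Gam a -> a != 0 -> forall (c : F) d1 d2, a d1 = 0 -> a d2 = 0 ->
  forall m, act a (c *: d1 + d2) m = c *: act a d1 m + act a d2 m.
Proof. by case: HM => _ [H _]; apply: H. Qed.

Lemma act_dZ a c d m : Gam a -> a != 0 -> a d = 0 -> act a (c *: d) m = c *: act a d m.
Proof.
move=> Ga a_neq0 ad.
have act_d0 : act a 0 m = 0.
  have := act_is_linear_in_d Ga a_neq0 1 (linear0 a) (linear0 a) m.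
  by rewrite !scale1r addr0 => dup; apply: (addrI (act a 0 m)); rewrite addr0 -dup.
by rewrite -[c *: d]addr0 act_is_linear_in_d ?linear0 // act_d0 addr0.
Qed.

Lemma act_w a d t : Gam a -> a != 0 -> a d = 0 -> Gam t ->
  exists c : F, act a d (w t) = c *: w (a + t).
Proof. by case: HM => _ [_ [_ [H _]]]; apply: H. Qed.

Lemma w_neq0 t : Gam t -> w t != 0.
Proof. by case: HM => _ [_ [_ [_ [H _]]]]; apply: H. Qed.

Lemma act_bracket a b d1 d2 m : Gam a -> a != 0 -> Gam b -> b != 0 ->
  a d1 = 0 -> b d2 = 0 -> a d2 = 0 -> Gam (a + b) -> a + b != 0 ->
  act a d1 (act b d2 m) - act b d2 (act a d1 m) = b d1 *: act (a + b) d2 m.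
Proof.
move=> Ga a_neq0 Gb b_neq0 ad1 bd2 ad2 Gab ab_neq0.
case: HM => _ [_ [-> // _]]; rewrite (negbTE ab_neq0) ad2 scale0r subr0.
by rewrite act_dZ // add_lfunE ad2 bd2 addr0.
Qed.

Hypothesis GamD : forall a b, Gam a -> Gam b -> Gam (a + b).
Hypothesis GamN : forall a, Gam a -> Gam (- a).

Lemma act_commute a b d1 d2 m : Gam a -> a != 0 -> Gam b -> b != 0 ->
  a d1 = 0 -> b d2 = 0 -> a + b = 0 \/ a d2 = 0 /\ b d1 = 0 ->
  act a d1 (act b d2 m) = act b d2 (act a d1 m).
Proof.
move=> Ga a_neq0 Gb b_neq0 ad1 bd2 Hab; apply/eqP; rewrite -subr_eq0.
have [ab0|ab_neq0] := eqVneq (a + b) 0.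
  by case: HM => _ [_ [-> // _]]; rewrite ab0 eqxx.
case: Hab => [/eqP|[ad2 bd1]]; first by rewrite (negbTE ab_neq0).
by rewrite act_bracket ?bd1 ?scale0r //; apply: GamD.
Qed.

Lemma act_act_w_neq0 a b d1 d2 y : Gam a -> a != 0 -> a d1 = 0 ->
  Gam b -> b != 0 -> b d2 = 0 -> Gam y ->
  (act b d2 (act a d1 (w y)) != 0) = (act a d1 (w y) != 0) && (act b d2 (w (a + y)) != 0).
Proof.
move=> Ga a_neq0 ad1 Gb b_neq0 bd2 Gy; have [c ->] := act_w Ga a_neq0 ad1 Gy.
by rewrite actZ // !scaler_eq0 !negb_or w_neq0 ?andbT //; apply: GamD.
Qed.

Lemma act_w_eq0_shift a b d1 d2 y : Gam a -> a != 0 -> a d1 = 0 ->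
  Gam b -> b != 0 -> b d2 = 0 -> Gam y -> a + b = 0 \/ a d2 = 0 /\ b d1 = 0 ->
  act a d1 (w y) = 0 -> act b d2 (w y) != 0 -> act a d1 (w (b + y)) = 0.
Proof.
move=> Ga a_neq0 ad1 Gb b_neq0 bd2 Gy Hab ay_0 by_neq0.
have := act_act_w_neq0 Gb b_neq0 bd2 Ga a_neq0 ad1 Gy.
rewrite act_commute // act_act_w_neq0 // ay_0 eqxx by_neq0 /=.
by move=> /esym/negbT; rewrite negbK => /eqP.
Qed.

Lemma act_w_eq0_bracket a b d1 d2 y : Gam a -> a != 0 -> a d1 = 0 ->
  Gam b -> b != 0 -> b d2 = 0 -> a d2 = 0 -> b d1 != 0 -> a + b != 0 -> Gam y ->
  act b d2 (w y) = 0 -> act b d2 (w (a + y)) = 0 -> act (a + b) d2 (w y) = 0.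
Proof.
move=> Ga a_neq0 ad1 Gb b_neq0 bd2 ad2 bd1_neq0 ab_neq0 Gy by_0 aby_0.
have := act_bracket (w y) Ga a_neq0 Gb b_neq0 ad1 bd2 ad2 (GamD Ga Gb) ab_neq0.
have [c ->] := act_w Ga a_neq0 ad1 Gy.
rewrite by_0 act0 // actZ // aby_0 scaler0 subr0 => /esym/eqP.
by rewrite scaler_eq0 (negbTE bd1_neq0) => /eqP.
Qed.

Local Notation round_trip e d y := (act (- e) d (act e%R d (w y))).

Lemma round_trip_shift e d y : Gam e -> e != 0 -> e d = 0 -> Gam y ->
  (round_trip e d (e + y) != 0) = (round_trip e d y != 0).
Proof.
move=> Ge e_neq0 ed Gy.
have Gne := GamN Ge; have ne_neq0 : - e != 0 by rewrite oppr_eq0.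
have ned : (- e) d = 0 by rewrite opp_lfunE ed oppr0.
rewrite act_commute //; last by left; rewrite addNr.
by rewrite !act_act_w_neq0 ?addKr 1?andbC //; apply: GamD.
Qed.

(* If x^{ec}da killed w_x, commutation would make it kill w_{eb+x}, w_{-ec+x} and
   w_{eb-ec+x}; the bracket [x^{eb}dc, x^{ec}da] = ec(dc) x^{eb+ec}da then kills w_x
   and w_{-ec+x}, and finally [x^{-ec}db, x^{eb+ec}da] = eb(db) x^{eb}da kills w_x. *)
Lemma act_w_neq0_swap eb ec da db dc x :
  Gam eb -> eb != 0 -> Gam ec -> ec != 0 -> eb + ec != 0 ->
  eb da = 0 -> ec da = 0 -> ec db = 0 -> eb db != 0 -> eb dc = 0 -> ec dc != 0 -> Gam x ->
  act eb da (w x) != 0 -> act eb da (w (- ec + x)) != 0 -> act (- ec) db (w x) != 0 ->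
  act ec da (w x) != 0.
Proof.
move=> Geb eb_neq0 Gec ec_neq0 ebc_neq0 ebda ecda ecdb ebdb ebdc ecdc Gx ebx ebx' ncx.
apply/eqP => ecx.
have Gnc := GamN Gec; have nc_neq0 : - ec != 0 by rewrite oppr_eq0.
have ncdb : (- ec) db = 0 by rewrite opp_lfunE ecdb oppr0.
have ncda : (- ec) da = 0 by rewrite opp_lfunE ecda oppr0.
have Gx' : Gam (- ec + x) by apply: GamD.
have ecx1 : act ec da (w (eb + x)) = 0.
  by apply: (@act_w_eq0_shift _ _ _ da) => //; right.
have ecx2 : act ec da (w (- ec + x)) = 0.
  by apply: (@act_w_eq0_shift _ _ _ db) => //; left; rewrite addrN.
have ecx3 : act ec da (w (eb + (- ec + x))) = 0.
  by apply: (@act_w_eq0_shift _ _ _ da) => //; right.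
have ebcx : act (eb + ec) da (w x) = 0 by apply: (@act_w_eq0_bracket _ _ dc).
have ebcx' : act (eb + ec) da (w (- ec + x)) = 0 by apply: (@act_w_eq0_bracket _ _ dc).
have ebcda : (eb + ec) da = 0 by rewrite add_lfunE ebda ecda addr0.
have ebcdb : (eb + ec) db != 0 by rewrite add_lfunE ecdb addr0.
have := @act_w_eq0_bracket (- ec) (eb + ec) db da x.
have -> : - ec + (eb + ec) = eb by rewrite addrC addrK.
move/(_ Gnc nc_neq0 ncdb (GamD Geb Gec) ebc_neq0 ebcda ncda ebcdb eb_neq0 Gx ebcx ebcx').
by move/eqP; rewrite (negbTE ebx).
Qed.

Section Turn.
Variables (eb ec : dual D) (da db dc : D).
Hypotheses (Geb : Gam eb) (Gec : Gam ec).
Hypothesis indep : forall b c : int, eb *~ b + ec *~ c = 0 -> b = 0 /\ c = 0.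
Hypotheses (ebda : eb da = 0) (ecda : ec da = 0) (ecdb : ec db = 0) (ebdc : eb dc = 0).
Hypotheses (ebdb : eb db != 0) (ecdc : ec dc != 0).

Let comb_neq0 (b c : int) : (b != 0) || (c != 0) -> eb *~ b + ec *~ c != 0.
Proof. by apply: contraL => /eqP/indep [-> ->]. Qed.

Lemma round_trip_turn :
  (forall y, Gam y -> round_trip ec db y != 0 -> round_trip eb da y != 0) ->
  forall nu, Gam nu -> round_trip ec db nu != 0 -> round_trip ec da nu != 0.
Proof.
move=> turn nu Gnu ecdb_nu.
have eb_neq0 : eb != 0 by have := @comb_neq0 1 0 isT; rewrite mulr1z mulr0z addr0.
have ec_neq0 : ec != 0 by have := @comb_neq0 0 1 isT; rewrite mulr1z mulr0z add0r.
have ebc_neq0 : eb + ec != 0 by have := @comb_neq0 1 1 isT; rewrite !mulr1z.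
have ebnc_neq0 : eb + - ec != 0 by have := @comb_neq0 1 (-1) isT; rewrite mulr1z mulrN1z.
have Gnc := GamN Gec; have nc_neq0 : - ec != 0 by rewrite oppr_eq0.
have ncda : (- ec) da = 0 by rewrite opp_lfunE ecda oppr0.
have ncdb : (- ec) db = 0 by rewrite opp_lfunE ecdb oppr0.
have ncdc : (- ec) dc != 0 by rewrite opp_lfunE oppr_eq0.
have eb_step y : Gam y -> round_trip ec db y != 0 -> act eb da (w y) != 0.
  move=> Gy /(turn y Gy); rewrite act_act_w_neq0 ?oppr_eq0 ?opp_lfunE ?ebda ?oppr0 //.
  - by case/andP.
  - exact: GamN.
have Gnu1 : Gam (ec + nu) by apply: GamD.
have Gnu2 : Gam (ec + (ec + nu)) by apply: GamD.
have Gnu' : Gam (- ec + nu) by apply: GamD.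
have ecdb_nu1 : round_trip ec db (ec + nu) != 0 by rewrite round_trip_shift.
have ecdb_nu2 : round_trip ec db (ec + (ec + nu)) != 0 by rewrite !round_trip_shift.
have ecdb_nu' : round_trip ec db (- ec + nu) != 0 by rewrite -round_trip_shift ?addNKr.
rewrite act_act_w_neq0 //; apply/andP; split.
- apply: (@act_w_neq0_swap eb ec da db dc) => //; try exact: eb_step.
  by move: ecdb_nu'; rewrite act_act_w_neq0 // addNKr => /andP [].
- apply: (@act_w_neq0_swap eb (- ec) da db dc) => //; rewrite ?opprK; try exact: eb_step.
  by move: ecdb_nu1; rewrite act_act_w_neq0 // => /andP [].
Qed.

End Turn.

Section ThreeDirections.
Variables (e1 e2 e3 : dual D) (d1 d2 d3 : D).
Hypotheses (Ge2 : Gam e2) (Ge3 : Gam e3).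
Hypothesis indep23 : forall b c : int, e2 *~ b + e3 *~ c = 0 -> b = 0 /\ c = 0.
Hypotheses (e2d1 : e2 d1 = 0) (e3d1 : e3 d1 = 0) (e3d2 : e3 d2 = 0) (e2d3 : e2 d3 = 0).
Hypotheses (e2d2 : e2 d2 != 0) (e3d3 : e3 d3 != 0).

Lemma exists_alternatives : exists nu, Gam nu /\
  alternatives (round_trip e2 d1 nu) (round_trip e3 d1 nu) (round_trip e1 d2 nu)
               (round_trip e3 d2 nu) (round_trip e1 d3 nu) (round_trip e2 d3 nu).
Proof.
have G0 : Gam 0 by rewrite -(subrr e2); apply/GamD/GamN.
have indep32 b c : e3 *~ b + e2 *~ c = 0 -> b = 0 /\ c = 0 by rewrite addrC => /indep23 [].
apply: NNPP => none.
have imp y : Gam y -> (round_trip e3 d2 y != 0 -> round_trip e2 d1 y != 0) /\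
                      (round_trip e2 d3 y != 0 -> round_trip e3 d1 y != 0).
  move=> Gy; have [alt|//] := alternatives_or_implications (round_trip e2 d1 y)
    (round_trip e3 d1 y) (round_trip e1 d2 y) (round_trip e3 d2 y) (round_trip e1 d3 y)
    (round_trip e2 d3 y).
  by case: none; exists y.
apply: none; exists 0; split => //.
apply: alternatives_of_implications; [exact: (imp 0 G0).1 | exact: (imp 0 G0).2 | |].
- by apply: (@round_trip_turn e2 e3 d1 d2 d3) => // y Gy; case: (imp y Gy).
- by apply: (@round_trip_turn e3 e2 d1 d3 d2) => // y Gy; case: (imp y Gy).
Qed.

End ThreeDirections.

End GradedModule.

Theorem lemma3p5 (F : closedFieldType) (HcharF : [pchar F] =i pred0)
  (D : vectType F) (HdimD : \dim {:D} = 3%N)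
  (e1 e2 e3 : dual D)
  (Hbasis : forall a b c : int, e1 *~ a + e2 *~ b + e3 *~ c = 0 ->
              [/\ a = 0, b = 0 & c = 0])
  (Hker : forall x : D, (forall al, inZspan3 e1 e2 e3 al -> al x = 0) -> x = 0)
  (M : lmodType F) (act : dual D -> D -> M -> M) (w : dual D -> M)
  (HM : graded_S_module (inZspan3 e1 e2 e3) act w)
  (d1 d2 d3 : D)
  (Hd1 : [/\ d1 != 0, e2 d1 = 0 & e3 d1 = 0])
  (Hd2 : [/\ d2 != 0, e1 d2 = 0 & e3 d2 = 0])
  (Hd3 : [/\ d3 != 0, e1 d3 = 0 & e2 d3 = 0]) :
  exists nu, inZspan3 e1 e2 e3 nu /\
    ((act (- e2) d1 (act e2 d1 (w nu)) != 0 /\ act (- e3) d1 (act e3 d1 (w nu)) != 0)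
  \/ (act (- e1) d2 (act e1 d2 (w nu)) != 0 /\ act (- e3) d2 (act e3 d2 (w nu)) != 0)
  \/ (act (- e1) d3 (act e1 d3 (w nu)) != 0 /\ act (- e2) d3 (act e2 d3 (w nu)) != 0)
  \/ (act (- e3) d1 (act e3 d1 (w nu)) = 0 /\ act (- e3) d2 (act e3 d2 (w nu)) = 0)
  \/ (act (- e1) d2 (act e1 d2 (w nu)) = 0 /\ act (- e1) d3 (act e1 d3 (w nu)) = 0)
  \/ (act (- e2) d1 (act e2 d1 (w nu)) = 0 /\ act (- e2) d3 (act e2 d3 (w nu)) = 0)).
Proof.
case: Hd1 => _ e2d1 e3d1; case: Hd2 => d2_neq0 e1d2 e3d2; case: Hd3 => d3_neq0 e1d3 e2d3.
have e2d2 : e2 d2 != 0.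
  by apply: contra d2_neq0 => /eqP e2d2; apply/eqP/Hker => al; apply: inZspan3_eval0.
have e3d3 : e3 d3 != 0.
  by apply: contra d3_neq0 => /eqP e3d3; apply/eqP/Hker => al; apply: inZspan3_eval0.
exact: (exists_alternatives HM (@inZspan3D _ e1 e2 e3) (@inZspan3N _ e1 e2 e3) e1
  (inZspan3_2 e1 e2 e3) (inZspan3_3 e1 e2 e3) (Zbasis_indep23 Hbasis)
  e2d1 e3d1 e3d2 e2d3 e2d2 e3d3).
Qed.
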